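(* Let $\theta\in(0,\pi/2]$ be a Pythagorean angle, i.e. $\cos\theta=s/r$ and $\sin\theta=t/r$ are both rational, with $r,s\in\mathbb{Z}$, $0\le|s|<r$, $\gcd(r,s)=1$. Then: (i) $\mathcal{N}_\theta=\mathbb{N}$; (ii) for every $n\in\mathcal{N}_\theta$ there are infinitely many distinct $\theta$-parallelogram envelopes for $n$; (iii) for every $n\in\mathcal{N}_\theta$ there are infinitely many rational numbers $m\ge1$ such that $n\in\mathcal{N}_{\theta,m}$.
   Context: A $\theta$-parallelogram envelope for a natural number $n$ is a quintuple of positive rationals $(a,b,c,d,e)$ with $a^2+b^2-\frac{2s}{r}ab=c^2$, $a^2+d^2+\frac{2s}{r}ad=e^2$, and $a(b+d)=rn$; $\mathcal{N}_\theta$ is the set of natural numbers admitting one. For a positive rational $m$, $\mathcal{N}_{\theta,m}$ is the set of natural numbers $n$ admitting such an envelope with additionally $d=mb$. *)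

From mathcomp Require Import all_boot all_order all_algebra.
Set Implicit Arguments. Unset Strict Implicit. Unset Printing Implicit Defensive.
Import Order.TTheory GRing.Theory Num.Theory.
Local Open Scope ring_scope.

(* The angle theta enters only through cos(theta) = s/r. *)

Definition is_envelope (r s : int) (n : nat) (a b c d e : rat) : Prop :=
  [/\ 0 < a, 0 < b, 0 < c, 0 < d & 0 < e] /\
  a ^+ 2 + b ^+ 2 - 2 * (s%:~R / r%:~R) * a * b = c ^+ 2 /\
  a ^+ 2 + d ^+ 2 + 2 * (s%:~R / r%:~R) * a * d = e ^+ 2 /\
  a * (b + d) = r%:~R * n%:R.

Definition envelope_of (r s : int) (n : nat) (x : rat * rat * rat * rat * rat) : Prop :=
  let: (a, b, c, d, e) := x in is_envelope r s n a b c d e.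

Definition in_N_theta (r s : int) (n : nat) : Prop :=
  exists a b c d e, is_envelope r s n a b c d e.

Definition in_N_theta_m (r s : int) (m : rat) (n : nat) : Prop :=
  exists a b c d e, is_envelope r s n a b c d e /\ d = m * b.

(* Pythagorean angle theta in (0, pi/2]: cos theta = s/r, sin theta = t/r, with
   r, s integers, 0 <= |s| < r, gcd(r,s) = 1, t rational.  Since theta is in
   (0, pi/2], cos theta >= 0 and sin theta > 0, and such theta exists iff
   s >= 0 and some rational t > 0 has s^2 + t^2 = r^2. *)
Definition pythagorean_angle (r s : int) : Prop :=
  [/\ 0 <= s, `|s| < r, gcdz r s = 1 &
      exists t : rat, 0 < t /\ (s%:~R) ^+ 2 + t ^+ 2 = (r%:~R : rat) ^+ 2].

From mathcomp Require Import all_boot all_order all_algebra.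
From mathcomp Require Import ring lra.
Set Implicit Arguments.
Unset Strict Implicit.
Unset Printing Implicit Defensive.

Import Order.TTheory GRing.Theory Num.Theory.
Local Open Scope ring_scope.

(* Scaling a quintuple by [l] keeps both quadratic relations and multiplies
   [a (b + d)] by [l ^+ 2], so an envelope is a choice of ratios [b/a, d/a]
   plus a square class. With [k = cos theta], the quadratic relations say that
   [b/a] and [d/a] are abscissae of rational points of the conics
   [1 + x^2 -+ 2 k x = y^2], which are rationally parametrised because
   [sin theta] is rational. Parametrising the first conic at [2 + 1/v] and the
   second at [v] gives [b/a + d/a = sin theta (v + 1)^2 / (2 v + 1)], so the
   area condition only asks [(2 v + 1) r n / sin theta] to be a square. That
   happens for arbitrarily large [v], and then [d/b] is arbitrarily large:
   every [n >= 1] has envelopes with unbounded [d/b], which yields (i)-(iii). *)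

(* [is_envelope r s n] unfolds to [envelope_for (s / r) (r * n)]. *)
Definition envelope_for (R : numDomainType) (k N a b c d e : R) : Prop :=
  [/\ 0 < a, 0 < b, 0 < c, 0 < d & 0 < e] /\
  a ^+ 2 + b ^+ 2 - 2 * k * a * b = c ^+ 2 /\
  a ^+ 2 + d ^+ 2 + 2 * k * a * d = e ^+ 2 /\
  a * (b + d) = N.

Lemma envelope_for_gt0 (R : numDomainType) (k N a b c d e : R) :
  envelope_for k N a b c d e -> 0 < N.
Proof. by case=> [[a_gt0 b_gt0 _ d_gt0 _] [_ [_ <-]]]; rewrite mulr_gt0 ?addr_gt0. Qed.

Lemma envelope_for_scale (R : numDomainType) (k N a x y p q : R) :
  0 < a -> 0 < x -> 0 < y -> 0 < p -> 0 < q ->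
  1 + x ^+ 2 - 2 * k * x = p ^+ 2 -> 1 + y ^+ 2 + 2 * k * y = q ^+ 2 ->
  a ^+ 2 * (x + y) = N -> envelope_for k N a (a * x) (a * p) (a * y) (a * q).
Proof.
move=> a_gt0 x_gt0 y_gt0 p_gt0 q_gt0 x_eq y_eq <-.
split; first by split; rewrite ?mulr_gt0.
split; last split; last by ring.
- by rewrite !exprMn -x_eq; ring.
- by rewrite !exprMn -y_eq; ring.
Qed.

Lemma cosine_conic_param (R : numFieldType) (h t u x : R) :
  h ^+ 2 + t ^+ 2 = 1 -> u != 0 -> x = h + t * (u - u^-1) / 2 ->
  1 + x ^+ 2 - 2 * h * x = (t * (u + u^-1) / 2) ^+ 2.
Proof.
move=> cos_sin u_neq0 x_def.
have -> : 1 + x ^+ 2 - 2 * h * x = 1 - h ^+ 2 - t ^+ 2 + (t * (u + u^-1) / 2) ^+ 2.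
  by rewrite x_def; field.
by rewrite -cos_sin; ring.
Qed.

Lemma exists_scaled_sqr_ge (R : realFieldType) (c W : R) :
  0 < c -> exists2 M : R, 0 < M & W <= c * M ^+ 2.
Proof.
move=> c_gt0; have Wc_ge0 : 0 <= `|W| / c by apply: divr_ge0; rewrite // ltW.
have M_ge1 : 1 <= 1 + `|W| / c by lra.
exists (1 + `|W| / c); first lra.
have : c * (1 + `|W| / c) <= c * (1 + `|W| / c) ^+ 2.
  by rewrite ler_pM2l // expr2 ler_peMl // (le_trans ler01).
rewrite mulrDr mulr1 mulrCA divff ?gt_eqF // mulr1.
have := ler_norm W; lra.
Qed.

Lemma seq_upper_bound (R : realDomainType) (x0 : R) (l : seq R) :
  exists2 B : R, x0 <= B & {in l, forall x, x <= B}.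
Proof.
elim: l => [|y l [B x0_le_B l_le_B]]; first by exists x0.
exists (Num.max y B) => [|x]; first by rewrite le_max x0_le_B orbT.
by rewrite inE => /predU1P [->|/l_le_B x_le_B]; rewrite le_max ?lexx ?x_le_B ?orbT.
Qed.

Section LargeRatioEnvelopes.

Variable R : realFieldType.
Implicit Types (k t v B N : R).

Definition b_over_a k t v := k + t * ((2 + v^-1) - (2 + v^-1)^-1) / 2.
Definition c_over_a t v := t * ((2 + v^-1) + (2 + v^-1)^-1) / 2.
Definition d_over_a k t v := - k + t * (v - v^-1) / 2.
Definition e_over_a t v := t * (v + v^-1) / 2.

Lemma b_over_a_gt0 k t v : 0 <= k -> 0 < t -> 0 < v -> 0 < b_over_a k t v.
Proof.
move=> k_ge0 t_gt0 v_gt0; have u_gt1 : 1 < 2 + v^-1 by have := invr_gt0 v; lra.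
have uV_lt1 : (2 + v^-1)^-1 < 1 by rewrite invf_lt1 //; lra.
by rewrite ltr_wpDl // divr_gt0 // mulr_gt0 // subr_gt0 (lt_trans uV_lt1).
Qed.

Lemma c_over_a_gt0 t v : 0 < t -> 0 < v -> 0 < c_over_a t v.
Proof.
move=> t_gt0 v_gt0; have u_gt0 : 0 < 2 + v^-1 by have := invr_gt0 v; lra.
by rewrite divr_gt0 // mulr_gt0 // addr_gt0 // invr_gt0.
Qed.

Lemma e_over_a_gt0 t v : 0 < t -> 0 < v -> 0 < e_over_a t v.
Proof. by move=> t_gt0 v_gt0; rewrite divr_gt0 // mulr_gt0 // addr_gt0 // invr_gt0. Qed.

Lemma b_over_a_sqr k t v : k ^+ 2 + t ^+ 2 = 1 -> 0 < v ->
  1 + b_over_a k t v ^+ 2 - 2 * k * b_over_a k t v = c_over_a t v ^+ 2.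
Proof.
move=> cos_sin v_gt0; apply: cosine_conic_param => //.
by rewrite gt_eqF // ltr_wpDr // ltW // invr_gt0.
Qed.

Lemma d_over_a_sqr k t v : k ^+ 2 + t ^+ 2 = 1 -> 0 < v ->
  1 + d_over_a k t v ^+ 2 + 2 * k * d_over_a k t v = e_over_a t v ^+ 2.
Proof.
move=> cos_sin v_gt0.
have -> : 2 * k * d_over_a k t v = - (2 * - k * d_over_a k t v) by ring.
by apply: cosine_conic_param; rewrite ?sqrrN ?gt_eqF.
Qed.

Lemma b_over_a_add_d_over_a k t v : 0 < v ->
  b_over_a k t v + d_over_a k t v = t * (v + 1) ^+ 2 / (2 * v + 1).
Proof.
move=> v_gt0; rewrite /b_over_a /d_over_a; field.
by rewrite gt_eqF //; have := invr_gt0 v; lra.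
Qed.

Lemma d_over_a_dominates k t B : 0 <= k -> 0 < t -> 0 <= B ->
  exists2 V : R, 1 <= V & forall v, V <= v -> B * b_over_a k t v < d_over_a k t v.
Proof.
move=> k_ge0 t_gt0 B_ge0; pose C := k + B * (k + 3 * t / 2).
have C_ge0 : 0 <= C.
  have : 0 <= k + 3 * t / 2 by lra.
  by move/(mulr_ge0 B_ge0); rewrite /C; lra.
have Ct_ge0 : 0 <= 2 * C / t by rewrite divr_ge0 // ?mulr_ge0 // ltW.
exists (2 * C / t + 2) => [|v V_le_v]; first lra.
have v_gt0 : 0 < v by lra.
have Vv_le1 : v^-1 <= 1 by rewrite invf_le1 //; lra.
have b_le : b_over_a k t v <= k + 3 * t / 2.
  have uV_ge0 : 0 <= (2 + v^-1)^-1 by rewrite invr_ge0; have := invr_gt0 v; lra.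
  have : t * ((2 + v^-1) - (2 + v^-1)^-1) <= t * 3 by rewrite ler_pM2l //; lra.
  rewrite /b_over_a; lra.
have d_ge : t * (v - 1) / 2 - k <= d_over_a k t v.
  have : t * (v - 1) <= t * (v - v^-1) by rewrite ler_pM2l //; lra.
  rewrite /d_over_a; lra.
have : 2 * C + t <= t * (v - 1).
  have -> : 2 * C + t = t * (2 * C / t + 1) by field; rewrite gt_eqF.
  by rewrite ler_pM2l //; lra.
have := ler_wpM2l B_ge0 b_le; rewrite /C; lra.
Qed.

Lemma envelope_large_ratio k t N B :
  k ^+ 2 + t ^+ 2 = 1 -> 0 <= k -> 0 < t -> 0 < N -> 0 <= B ->
  exists a b c d e, envelope_for k N a b c d e /\ B < d / b.
Proof.
move=> cos_sin k_ge0 t_gt0 N_gt0 B_ge0.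
have [V V_ge1 dominates] := d_over_a_dominates k_ge0 t_gt0 B_ge0.
have Nt_gt0 : 0 < N / t by rewrite divr_gt0.
have [M M_gt0 M_large] := exists_scaled_sqr_ge (2 * V + 1) Nt_gt0.
(* [2 v + 1 = (N / t) M^2], which makes [a ^+ 2 * (b/a + d/a) = N] below. *)
pose v : R := (N / t * M ^+ 2 - 1) / 2.
have V_le_v : V <= v by rewrite /v; lra.
have v_gt0 : 0 < v by lra.
pose a : R := N / t * M / (v + 1).
have a_gt0 : 0 < a by apply: divr_gt0; [apply: mulr_gt0 | apply: addr_gt0].
have ba_gt0 := b_over_a_gt0 k_ge0 t_gt0 v_gt0.
have da_gt := dominates v V_le_v.
have da_gt0 : 0 < d_over_a k t v by have := mulr_ge0 B_ge0 (ltW ba_gt0); lra.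
exists a, (a * b_over_a k t v), (a * c_over_a t v), (a * d_over_a k t v), (a * e_over_a t v).
split.
  apply: envelope_for_scale; rewrite ?b_over_a_sqr ?d_over_a_sqr ?c_over_a_gt0 ?e_over_a_gt0 //.
  rewrite (b_over_a_add_d_over_a k t v_gt0) /a /v; field.
  have NM_gt0 : 0 < N * M ^+ 2 by rewrite mulr_gt0 // exprn_gt0.
  by rewrite !gt_eqF //; lra.
rewrite ltr_pdivlMr; last exact: mulr_gt0.
have -> : B * (a * b_over_a k t v) = a * (B * b_over_a k t v) by ring.
by rewrite ltr_pM2l.
Qed.

End LargeRatioEnvelopes.

Lemma pythagorean_angle_cos_sin (r s : int) : pythagorean_angle r s ->
  exists t : rat, [/\ 0 < (r%:~R : rat),
    (s%:~R / r%:~R) ^+ 2 + (t / r%:~R) ^+ 2 = 1, 0 <= (s%:~R / r%:~R : rat) & 0 < t / r%:~R].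
Proof.
case=> s_ge0 s_lt_r _ [t [t_gt0 pyth]].
have r_gt0 : 0 < (r%:~R : rat) by rewrite ltr0z (le_lt_trans (normr_ge0 s)).
exists t; split=> //; last by rewrite divr_gt0.
  by rewrite !expr_div_n -mulrDl pyth divff // expf_neq0 // gt_eqF.
by apply: divr_ge0; [rewrite ler0z | exact: ltW].
Qed.

Theorem theorem6p4 (r s : int) :
  pythagorean_angle r s ->
  (* (i) N_theta = N = {1,2,3,...} *)
  (forall n : nat, in_N_theta r s n <-> (0 < n)%N) /\
  (* (ii) infinitely many distinct envelopes for each n in N_theta *)
  (forall n : nat, in_N_theta r s n ->
     ~ exists l : seq (rat * rat * rat * rat * rat),
         forall x, envelope_of r s n x -> x \in l) /\
  (* (iii) infinitely many rationals m >= 1 with n in N_{theta,m} *)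
  (forall n : nat, in_N_theta r s n ->
     ~ exists l : seq rat, forall m : rat, 1 <= m -> in_N_theta_m r s m n -> m \in l).
Proof.
move=> /pythagorean_angle_cos_sin [t [r_gt0 cos_sin k_ge0 t_gt0]].
have envelope_gt n (B : rat) : (0 < n)%N -> 0 <= B ->
    exists a b c d e, is_envelope r s n a b c d e /\ B < d / b.
  by move=> n_gt0; apply: envelope_large_ratio cos_sin k_ge0 t_gt0 _; rewrite mulr_gt0 ?ltr0n.
have N_theta_gt0 n : in_N_theta r s n -> (0 < n)%N.
  by case=> [a [b [c [d [e /envelope_for_gt0]]]]]; rewrite pmulr_rgt0 // ltr0n.
split; [|split] => n.
- split=> [/N_theta_gt0 //|n_gt0].
  have [a [b [c [d [e [E _]]]]]] := envelope_gt n 0 n_gt0 (lexx 0).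
  by exists a, b, c, d, e.
- move=> /N_theta_gt0 n_gt0 [l l_all].
  have [B B_ge0 B_ub] := seq_upper_bound 0 [seq x.1.2 / x.1.1.1.2 | x <- l].
  have [a [b [c [d [e [E ratio]]]]]] := envelope_gt n B n_gt0 B_ge0.
  have := B_ub _ (map_f (fun x => x.1.2 / x.1.1.1.2) (l_all (a, b, c, d, e) E)).
  by rewrite leNgt ratio.
- move=> /N_theta_gt0 n_gt0 [l l_all].
  have [B B_ge1 B_ub] := seq_upper_bound 1 l.
  have [a [b [c [d [e [E ratio]]]]]] := envelope_gt n B n_gt0 (le_trans ler01 B_ge1).
  have b_gt0 : 0 < b by case: E => [[]].
  have : d / b \in l.
    apply: l_all; first exact/ltW/(le_lt_trans B_ge1).
    by exists a, b, c, d, e; rewrite divfK ?gt_eqF.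
  by move/B_ub; rewrite leNgt ratio.
Qed.
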